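(* Let $L$ be a finite LC-loop and $x\in L$. Then the order of $x$ divides $|L|$.
   Context: An LC-loop is a loop satisfying $(xx)(yz)=(x(xy))z$ for all $x,y,z$; LC-loops are power associative, and the order of $x$ is the size of the subloop (cyclic group) generated by $x$, i.e. the least $n>0$ with $x^n=e$. *)

From mathcomp Require Import all_boot.
Set Implicit Arguments. Unset Strict Implicit. Unset Printing Implicit Defensive.

Definition is_loop (T : finType) (mul : T -> T -> T) (e : T) : Prop :=
  [/\ left_id e mul, right_id e mul,
      forall a, bijective (mul a) &
      forall a, bijective (fun y => mul y a)].

Definition LC_identity (T : Type) (mul : T -> T -> T) : Prop :=
  forall x y z, mul (mul x x) (mul y z) = mul (mul x (mul x y)) z.

Definition is_subloop (T : finType) (mul : T -> T -> T) (e : T) (S : {set T}) : bool :=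
  [&& e \in S,
      [forall a, forall b, ((a \in S) && (b \in S)) ==> (mul a b \in S)],
      [forall a, forall b, forall y, [&& a \in S, b \in S & mul a y == b] ==> (y \in S)] &
      [forall a, forall b, forall y, [&& a \in S, b \in S & mul y a == b] ==> (y \in S)]].

Definition gen_subloop (T : finType) (mul : T -> T -> T) (e : T) (x : T) : {set T} :=
  [set y | [forall S : {set T}, (is_subloop mul e S && (x \in S)) ==> (y \in S)]].

Definition loop_order (T : finType) (mul : T -> T -> T) (e : T) (x : T) : nat :=
  #|gen_subloop mul e x|.

From mathcomp Require Import all_boot.

Set Implicit Arguments.
Unset Strict Implicit.
Unset Printing Implicit Defensive.

(* In an LC-loop, left multiplication by x^n agrees with the n-th power of the
   left translation L_x, so every L_x-orbit is a right translate of the orbit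
   of e, namely the cyclic subloop generated by x.  Hence all L_x-orbits have
   the same size, and they partition L. *)

Lemma injective_imset_stable (T : finType) (g : T -> T) (S : {set T}) :
  injective g -> {in S, forall a, g a \in S} -> g @: S = S.
Proof.
move=> g_inj gS; apply/eqP; rewrite eqEcard card_imset // leqnn andbT.
by apply/subsetP => _ /imsetP[a aS ->]; apply: gS.
Qed.

Lemma order_const_dvdn_card (T : finType) (f : T -> T) (n : nat) :
  injective f -> (forall y, order f y = n) -> n %| #|T|.
Proof.
move=> f_inj ordf; rewrite -(@fcard_order_set _ _ f_inj n predT) ?dvdn_mull //.
by apply/subsetP => y _; rewrite inE ordf.
Qed.

Section FiniteLoop.
Variables (T : finType) (mul : T -> T -> T) (e : T).
Hypothesis hloop : is_loop mul e.

Let mulr_inj a : injective (mul^~ a).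
Proof. by case: hloop => _ _ _ /(_ a)/bij_inj. Qed.

Let mull_inj a : injective (mul a).
Proof. by case: hloop => _ _ /(_ a)/bij_inj. Qed.

(* Finiteness makes the divisibility conditions automatic: a translation of S
   that maps S into itself is onto S. *)
Lemma mul_closed_subloop (S : {set T}) :
  e \in S -> {in S &, forall a b, mul a b \in S} -> is_subloop mul e S.
Proof.
move=> eS mulS; apply/and4P; split=> //.
- by apply/forallP => a; apply/forallP => b; apply/implyP => /andP[aS bS]; apply: mulS.
- apply/forallP => a; apply/forallP => b; apply/forallP => y.
  apply/implyP => /and3P[aS bS /eqP yab].
  have: b \in mul a @: S by rewrite injective_imset_stable // => z zS; apply: mulS.
  by case/imsetP => z zS; rewrite -yab => /mull_inj ->.
- apply/forallP => a; apply/forallP => b; apply/forallP => y.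
  apply/implyP => /and3P[aS bS /eqP yab].
  have: b \in mul^~ a @: S by rewrite injective_imset_stable // => z zS; apply: mulS.
  by case/imsetP => z zS; rewrite -yab => /mulr_inj ->.
Qed.

Lemma gen_subloop_eq (x : T) (S : {set T}) :
  is_subloop mul e S -> x \in S ->
  (forall S', is_subloop mul e S' -> x \in S' -> S \subset S') ->
  gen_subloop mul e x = S.
Proof.
move=> subS xS minS; apply/setP => y; rewrite inE.
apply/forallP/idP => [/(_ S)/implyP-> // | yS S']; first by rewrite subS.
by apply/implyP => /andP[subS' xS']; apply: (subsetP (minS S' subS' xS')).
Qed.

Section LCLoop.
Hypothesis hLC : LC_identity mul.

(* Both sides equal (xx)(wz) by the LC identity, the left one with z := e. *)
Lemma mulxxA x w z : mul x (mul x (mul w z)) = mul (mul x (mul x w)) z.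
Proof.
case: hloop => _ mul1r _ _.
by have := hLC x (mul w z) e; rewrite !mul1r => <-; rewrite -hLC.
Qed.

Lemma iter_double_mulA x j y z :
  iter j.*2 (mul x) (mul y z) = mul (iter j.*2 (mul x) y) z.
Proof. by elim: j => [|j IHj] //; rewrite doubleS /= IHj mulxxA. Qed.

Lemma mul_powl x n z : mul (iter n (mul x) e) z = iter n (mul x) z.
Proof.
case: hloop => mul1l mul1r _ _.
rewrite -[n]odd_double_half; case: (odd n) => /=; rewrite add0n; last first.
  by rewrite -iter_double_mulA mul1l.
by rewrite -[in LHS]iterS iterSr mul1r -iter_double_mulA -iterSr.
Qed.

Variable x : T.
Local Notation Lx := (mul x).

Lemma fconnect_mulx_rtranslate y :
  [set z | fconnect Lx y z] = mul^~ y @: [set z | fconnect Lx e z].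
Proof.
apply/setP => z; rewrite inE; apply/idP/imsetP => [yz | [w]].
  exists (iter (findex Lx y z) Lx e); first by rewrite inE fconnect_iter.
  by rewrite mul_powl iter_findex.
by rewrite inE => /iter_findex <- ->; rewrite mul_powl fconnect_iter.
Qed.

Lemma order_mulx y : order Lx y = order Lx e.
Proof.
rewrite /order -(cardsE (fconnect Lx y)) -(cardsE (fconnect Lx e)).
by rewrite fconnect_mulx_rtranslate card_imset.
Qed.

Lemma loop_order_mulx : loop_order mul e x = order Lx e.
Proof.
pose S := [set y | fconnect Lx e y].
have powS y : y \in S -> y = iter (findex Lx e y) Lx e by rewrite inE => /iter_findex.
have subS : is_subloop mul e S.
  apply: mul_closed_subloop => [|a b /powS-> /powS->]; first by rewrite inE connect0.
  by rewrite mul_powl -iterD inE fconnect_iter.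
have xS : x \in S.
  by case: hloop => _ mul1r _ _; rewrite inE -{2}(mul1r x) fconnect1.
rewrite /loop_order (gen_subloop_eq subS xS) ?cardsE // => S' subS' xS'.
apply/subsetP => y /powS->; elim: (findex _ _ _) => [|i IHi] /=.
  by case/and4P: subS'.
by case/and4P: subS' => _ /forallP/(_ x)/forallP/(_ (iter i Lx e)); rewrite xS' IHi.
Qed.

End LCLoop.
End FiniteLoop.

Theorem corollary4p7 (T : finType) (mul : T -> T -> T) (e : T)
  (hloop : is_loop mul e) (hLC : LC_identity mul) (x : T) :
  loop_order mul e x %| #|T|.
Proof.
rewrite (loop_order_mulx hloop hLC).
have [_ _ /(_ x)/bij_inj mulx_inj _] := hloop.
exact/(order_const_dvdn_card mulx_inj)/(order_mulx hloop hLC).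
Qed.
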